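(* Assume $CA_2$. Then $\omega_1\not\rightarrow(\omega_1,\omega+2)^2_2$; that is, there is $c:[\omega_1]^2\to2$ such that there is no uncountable $0$-monochromatic subset of $\omega_1$ and no $1$-monochromatic subset of $\omega_1$ of order type $\omega+2$.
   Context: A set $Y\subseteq\omega_1$ is $i$-monochromatic for $c$ if $c(\{\alpha,\beta\})=i$ for all distinct $\alpha,\beta\in Y$. A type is a sequence $\tau=\{(m_k,n_{k+1},r_{k+1})\}_{k\in\omega}$ of natural numbers with $m_0=1$; $n_k\ge2$ for $k\ge1$; every $r\in\omega$ equals $r_k$ for infinitely many $k$; $m_k>r_{k+1}$; and $m_{k+1}=r_{k+1}+(m_k-r_{k+1})n_{k+1}$ for all $k$. For a set of ordinals $X$ and $\mathcal F\subseteq[X]^{<\omega}$, $\mathcal F_k$ is the set of elements of rank $k$ in $(\mathcal F,\subsetneq)$; $A\sqsubseteq B$ means $A\subseteq B$ and every element of $B$ below an element of $A$ is in $A$; $A<B$ means every element of $A$ is below every element of $B$. $\mathcal F$ is a construction scheme over $X$ of type $\tau$ if (1) every finite subset of $X$ lies in a member of $\mathcal F$; (2) $|F|=m_k$ for $F\in\mathcal F_k$; (3) $E\cap F\sqsubseteq E,F$ for $E,F\in\mathcal F_k$; (4) each $F\in\mathcal F_{k+1}$ is the union of uniquely determined $F_0,\dots,F_{n_{k+1}-1}\in\mathcal F_k$ forming a $\Delta$-system with root $R(F)$, $|R(F)|=r_{k+1}$, $R(F)<F_0\setminus R(F)<\dots<F_{n_{k+1}-1}\setminus R(F)$. For a construction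 scheme $\mathcal F$ over $\omega_1$, $l\ge1$, $F\in\mathcal F_l$ and finite $\mathcal C\subseteq[\omega_1]^{<\omega}$: $F$ captures $\mathcal C$ if $|\mathcal C|\le n_l$ and $\mathcal C$ can be enumerated as $\{c_i\}_{i<|\mathcal C|}$ with $c_i\subseteq F_i$, $c_i\setminus R(F)\neq\emptyset$ and $\phi_i[c_0]=c_i$ where $\phi_i:F_0\to F_i$ is the increasing bijection. $\mathcal F$ is $n$-capturing if for every uncountable $S\subseteq[\omega_1]^{<\omega}$ and every $k\in\omega$ there are $\mathcal C\in[S]^n$, $l>k$ and $F\in\mathcal F_l$ capturing $\mathcal C$. $CA_n$ is the statement: for every type $\tau$ with $n\le n_k$ for all $k\ge1$ there is an $n$-capturing construction scheme over $\omega_1$ of type $\tau$. *)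

(* omega_1 is modelled as an arbitrary strict well-order (T, lt)
   that is uncountable and all of whose proper initial segments are countable;
   this determines (T, lt) up to isomorphism as omega_1.
   Finite subsets of T are represented canonically as strictly lt-increasing
   lists (so set equality = list equality). *)
From Stdlib Require Import List Arith Lia Sorting.Sorted Permutation.
Import ListNotations.

Section Defs.
Variable T : Type.
Variable lt : T -> T -> Prop.

Definition countable (Y : T -> Prop) : Prop :=
  exists f : T -> nat, forall x y, Y x -> Y y -> f x = f y -> x = y.

Definition IsOmega1 : Prop :=
  (forall x, ~ lt x x) /\
  (forall x y z, lt x y -> lt y z -> lt x z) /\
  (forall x y, lt x y \/ x = y \/ lt y x) /\
  well_founded lt /\
  ~ countable (fun _ => True) /\
  (forall x, countable (fun y => lt y x)).

Definition finset (A : list T) : Prop := StronglySorted lt A.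

Definition psub (B A : list T) : Prop := incl B A /\ ~ incl A B.

Inductive chain_to (F : list T -> Prop) : list T -> nat -> Prop :=
| chain0 A : F A -> chain_to F A 0
| chainS A B k : F A -> chain_to F B k -> psub B A -> chain_to F A (S k).

Definition rank_is (F : list T -> Prop) (A : list T) (k : nat) : Prop :=
  chain_to F A k /\ ~ chain_to F A (S k).

Definition init_seg (P : T -> Prop) (B : list T) : Prop :=
  (forall x, P x -> In x B) /\
  (forall x y, P x -> In y B -> lt y x -> P y).

Definition set_lt (P Q : T -> Prop) : Prop :=
  forall x y, P x -> Q y -> lt x y.

Definition diff (A R : list T) : T -> Prop := fun x => In x A /\ ~ In x R.

(* a type tau = (m_k, n_{k+1}, r_{k+1})_k given by three sequences
   (the values n 0 and r 0 are irrelevant) *)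
Definition is_type (m n r : nat -> nat) : Prop :=
  m 0 = 1 /\
  (forall k, 1 <= k -> 2 <= n k) /\
  (forall r0 N, exists k, N < k /\ r k = r0) /\
  (forall k, r (S k) < m k) /\
  (forall k, m (S k) = r (S k) + (m k - r (S k)) * n (S k)).

(* Fs = [F_0; ...; F_{n-1}] is a decomposition of A ∈ F_{k+1} into elements
   of F_k forming a Delta-system with root R, |R| = r, and
   R < F_0\R < ... < F_{n-1}\R *)
Definition decomp (F : list T -> Prop) (k : nat) (nk rk : nat)
    (A : list T) (Fs : list (list T)) (R : list T) : Prop :=
  length Fs = nk /\
  Forall (fun B => rank_is F B k) Fs /\
  (forall x, In x A <-> exists B, In B Fs /\ In x B) /\
  finset R /\ length R = rk /\
  (forall i j, i < j < nk ->
     forall x, (In x (nth i Fs []) /\ In x (nth j Fs [])) <-> In x R) /\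
  set_lt (fun x => In x R) (diff (nth 0 Fs []) R) /\
  (forall i, S i < nk -> set_lt (diff (nth i Fs []) R) (diff (nth (S i) Fs []) R)).

Definition construction_scheme (m n r : nat -> nat) (F : list T -> Prop) : Prop :=
  (forall A, F A -> finset A) /\
  (forall l : list T, exists A, F A /\ incl l A) /\
  (forall A k, rank_is F A k -> length A = m k) /\
  (forall E G k, rank_is F E k -> rank_is F G k ->
     init_seg (fun x => In x E /\ In x G) E /\
     init_seg (fun x => In x E /\ In x G) G) /\
  (forall A k, rank_is F A (S k) ->
     exists! Fs, exists R, decomp F k (n (S k)) (r (S k)) A Fs R).

Definition captures (m n r : nat -> nat) (F : list T -> Prop) (l : nat)
    (A : list T) (cs : list (list T)) : Prop :=
  1 <= l /\ rank_is F A l /\ length cs <= n l /\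
  exists cs', Permutation cs cs' /\
  exists Fs R k, l = S k /\ decomp F k (n l) (r l) A Fs R /\
  forall i, i < length cs' ->
    incl (nth i cs' []) (nth i Fs []) /\
    (exists x, In x (nth i cs' []) /\ ~ In x R) /\
    (* phi_i[c_0] = c_i, phi_i : F_0 -> F_i the increasing bijection *)
    (forall y, In y (nth i cs' []) <->
       exists j x, nth_error (nth 0 Fs []) j = Some x /\ In x (nth 0 cs' []) /\
                   nth_error (nth i Fs []) j = Some y).

Definition uncountable_family (S : list T -> Prop) : Prop :=
  ~ exists f : list T -> nat, forall A B, S A -> S B -> f A = f B -> A = B.

Definition n_capturing (m n r : nat -> nat) (N : nat) (F : list T -> Prop) : Prop :=
  forall S : list T -> Prop,
    (forall A, S A -> finset A) -> uncountable_family S ->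
    forall k, exists cs l A,
      NoDup cs /\ length cs = N /\ Forall S cs /\ k < l /\ captures m n r F l A cs.

Definition CA (N : nat) : Prop :=
  forall m n r : nat -> nat, is_type m n r -> (forall k, 1 <= k -> N <= n k) ->
  exists F, construction_scheme m n r F /\ n_capturing m n r N F.

(* colourings c : [omega_1]^2 -> 2 are given by c a b for a < b;
   false = colour 0, true = colour 1 *)
Definition monochromatic (c : T -> T -> bool) (i : bool) (Y : T -> Prop) : Prop :=
  forall a b, Y a -> Y b -> lt a b -> c a b = i.

Definition ordtype_omega_plus_2 (Y : T -> Prop) : Prop :=
  exists (f : nat -> T) (a b : T),
    (forall i j, i < j -> lt (f i) (f j)) /\
    (forall i, lt (f i) a) /\ lt a b /\
    (forall x, Y x <-> (exists i, x = f i) \/ x = a \/ x = b).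
End Defs.

From Stdlib Require Import List Arith.
From Stdlib Require Import Lia Sorting.Sorted Permutation FinFun Classical ClassicalEpsilon.
Import ListNotations.

Set Implicit Arguments.
Unset Strict Implicit.

(** Use the type with [n_k = 2] for all [k], and colour a pair [u < v] by 1
    iff [u] and [v] are twins: for some [D] in [F_(s+1)] with halves [D_0, D_1]
    and root [R], [u] lies in [D_0 \ R] and the increasing bijection
    [D_0 -> D_1] sends it to [v].

    If [Y] is uncountable, 2-capturing applied to the singletons of [Y]
    produces a captured pair [{u}, {v}], i.e. twins in [Y]; so 0-monochromatic
    sets are countable.

    Let [{x_i}_i ∪ {a < b}] be 1-monochromatic with [a, b] twins at level [s0].
    Only finitely many ordinals lie below [a] or [b] in a common set of rank at
    most [s0 + 1], so some [x = x_i] is a twin of [a] at a level [s1 > s0] and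
    of [b] at a level [s2 > s0].  Coherence of the scheme puts [a] into the
    right half of the set witnessing that [x, b] are twins.  If [s1 <> s2] the lower of the two
    witnessing sets drags [x] into both halves of the higher one, i.e. into its
    root; if [s1 = s2] the two increasing bijections agree on [x], and then [a]
    and [b] have the same position in sets of the same rank, so [a = b]. *)

(* [root_size (s * s + r) = r] whenever [r <= 2 * s], so every value recurs. *)
Definition root_size (k : nat) : nat := k - Nat.sqrt k * Nat.sqrt k.

Fixpoint binary_size (k : nat) : nat :=
  match k with
  | 0 => 1
  | S k' => root_size k + (binary_size k' - root_size k) * 2
  end.

Lemma root_size_succ_le k : root_size (S k) <= k.
Proof.
  unfold root_size. destruct (Nat.sqrt_spec (S k)) as [Hlo Hhi]; [lia|].
  destruct (Nat.sqrt (S k)); simpl in *; nia.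
Qed.

Lemma binary_size_gt k : k < binary_size k.
Proof.
  induction k as [|k IH]; simpl; [lia|].
  pose proof (root_size_succ_le k). lia.
Qed.

Lemma binary_type : is_type binary_size (fun _ => 2) root_size.
Proof.
  split; [reflexivity|]. split; [auto|]. split; [|split; [|reflexivity]].
  - intros r0 N. exists ((N + r0 + 1) * (N + r0 + 1) + r0). split; [nia|].
    unfold root_size. rewrite (Nat.sqrt_unique _ (N + r0 + 1)); nia.
  - intro k. pose proof (root_size_succ_le k). pose proof (binary_size_gt k). lia.
Qed.

Section SortedLists.

Variables (A : Type) (lt : A -> A -> Prop).
Hypothesis lt_irrefl : forall x, ~ lt x x.
Hypothesis lt_trans : forall x y z, lt x y -> lt y z -> lt x z.

Lemma sorted_head_le b L y : StronglySorted lt (b :: L) -> In y (b :: L) -> ~ lt y b.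
Proof.
  intros Hs [<-|Hy] Hyb; [exact (lt_irrefl Hyb)|].
  apply StronglySorted_inv in Hs as [_ Hb].
  exact (lt_irrefl (lt_trans Hyb (proj1 (Forall_forall _ _) Hb y Hy))).
Qed.

Lemma sorted_common_index_le L1 L2 i j u :
  StronglySorted lt L1 -> StronglySorted lt L2 ->
  (forall v y, In v L1 -> In v L2 -> In y L1 -> lt y v -> In y L2) ->
  nth_error L1 i = Some u -> nth_error L2 j = Some u -> i <= j.
Proof.
  revert L2 i j; induction L1 as [|a L1 IH];
    intros L2 i j S1 S2 down Hi Hj; [destruct i; discriminate|].
  destruct i as [|i]; [lia|].
  destruct L2 as [|b L2]; [destruct j; discriminate|].
  apply StronglySorted_inv in S1 as [S1 Ha].
  rewrite Forall_forall in Ha.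
  simpl in Hi. pose proof (nth_error_In _ _ Hi) as Hu.
  assert (Ha2 : In a (b :: L2)).
  { apply (down u); [right; exact Hu | exact (nth_error_In _ _ Hj) | left; reflexivity | exact (Ha u Hu)]. }
  destruct j as [|j]; simpl in Hj.
  - injection Hj as Hbu; subst u. exfalso. exact (sorted_head_le S2 Ha2 (Ha b Hu)).
  - apply le_n_S, (IH L2 i j S1); auto.
    + exact (proj1 (StronglySorted_inv S2)).
    + intros v y Hv1 Hv2 Hy Hyv.
      destruct (down v y) as [Hby|]; simpl; auto. subst y.
      exfalso. exact (sorted_head_le S2 Ha2 (Ha b Hy)).
Qed.

Lemma sorted_common_index L1 L2 i j u :
  StronglySorted lt L1 -> StronglySorted lt L2 ->
  (forall v y, In v L1 -> In v L2 -> In y L1 -> lt y v -> In y L2) ->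
  (forall v y, In v L2 -> In v L1 -> In y L2 -> lt y v -> In y L1) ->
  nth_error L1 i = Some u -> nth_error L2 j = Some u -> i = j.
Proof.
  intros S1 S2 down12 down21 Hi Hj.
  apply Nat.le_antisymm.
  - exact (sorted_common_index_le S1 S2 down12 Hi Hj).
  - exact (sorted_common_index_le S2 S1 down21 Hj Hi).
Qed.

End SortedLists.

Lemma injective_not_in_list (A : Type) (f : nat -> A) (L : list A) :
  Injective f -> exists i, ~ In (f i) L.
Proof.
  intro f_inj. apply NNPP. intro all_in.
  assert (Hincl : incl (map f (seq 0 (S (length L)))) L).
  { intros y Hy. apply in_map_iff in Hy as (i & <- & _).
    apply NNPP. intro Hi. apply all_in. eauto. }
  pose proof (NoDup_incl_length (Injective_map_NoDup f_inj (seq_NoDup _ 0)) Hincl) as Hlen.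
  rewrite length_map, length_seq in Hlen. lia.
Qed.

Section Scheme.

Variables (T : Type) (lt : T -> T -> Prop) (m n r : nat -> nat) (F : list T -> Prop).

Lemma rank_is_mem A k : rank_is T F A k -> F A.
Proof. intros [Hc _]. inversion Hc; assumption. Qed.

Lemma decomp_block_mem s nk rk D Fs R i x :
  decomp T lt F s nk rk D Fs R -> i < nk -> In x (nth i Fs []) -> In x D.
Proof.
  intros (Hlen & _ & Hunion & _) Hi Hx. apply Hunion.
  exists (nth i Fs []). split; [apply nth_In; lia | exact Hx].
Qed.

Lemma decomp_block_rank s nk rk D Fs R i :
  decomp T lt F s nk rk D Fs R -> i < nk -> rank_is T F (nth i Fs []) s.
Proof.
  intros (Hlen & Hranks & _) Hi.
  apply (proj1 (Forall_forall _ _) Hranks), nth_In. lia.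
Qed.

Lemma decomp_cap_root s nk rk D Fs R i j x :
  decomp T lt F s nk rk D Fs R -> i < j < nk ->
  In x (nth i Fs []) -> In x (nth j Fs []) -> In x R.
Proof.
  intros (_ & _ & _ & _ & _ & Hroot & _) Hij Hi Hj.
  exact (proj1 (Hroot i j Hij x) (conj Hi Hj)).
Qed.

Hypothesis scheme : construction_scheme T lt m n r F.

(* Axiom (3) of a construction scheme extends to sets of different ranks:
   descend from the larger set to the block of its rank that contains [u]. *)
Lemma rank_le_cap_lower_closed k l E G u v :
  k <= l -> rank_is T F E k -> rank_is T F G l ->
  In u E -> In u G -> In v E -> lt v u -> In v G.
Proof.
  destruct scheme as (_ & _ & _ & cap_init & decomposes).
  intro Hkl; revert G; induction Hkl as [|l Hkl IH]; intros G HE HG HuE HuG HvE Hvu.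
  - destruct (cap_init E G k HE HG) as [[_ downE] _].
    exact (proj2 (downE u v (conj HuE HuG) HvE Hvu)).
  - destruct (decomposes G l HG) as (Fs & (R & _ & Hranks & Hunion & _) & _).
    destruct (proj1 (Hunion u) HuG) as (B & HB & HuB).
    apply Hunion. exists B. split; [exact HB|].
    exact (IH B HE (proj1 (Forall_forall _ _) Hranks B HB) HuE HuB HvE Hvu).
Qed.

Lemma rank_predecessors_finite a k :
  exists L, forall x E, rank_is T F E k -> In x E -> In a E -> lt x a -> In x L.
Proof.
  destruct (classic (exists G, rank_is T F G k /\ In a G)) as [(G & HG & HaG)|no_set].
  - exists G. intros x E HE HxE HaE Hxa.
    exact (rank_le_cap_lower_closed (le_n k) HE HG HaE HaG HxE Hxa).
  - exists []. intros x E HE _ HaE _. apply no_set. eauto.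
Qed.

Lemma low_rank_predecessors_finite a K :
  exists L, forall x k E, k <= K -> rank_is T F E k -> In x E -> In a E -> lt x a -> In x L.
Proof.
  induction K as [|K [L HL]].
  - destruct (rank_predecessors_finite a 0) as [L HL].
    exists L. intros x k E Hk. replace k with 0 by lia. apply HL.
  - destruct (rank_predecessors_finite a (S K)) as [L' HL'].
    exists (L ++ L'). intros x k E Hk HE HxE HaE Hxa. apply in_or_app.
    destruct (Nat.eq_dec k (S K)) as [->|Hne].
    + right. exact (HL' x E HE HxE HaE Hxa).
    + left. apply (HL x k E); auto; lia.
Qed.

Lemma below_later_block_in_root s nk rk D Fs R i j k E x a :
  decomp T lt F s nk rk D Fs R -> i < j < nk ->
  rank_is T F E k -> k <= s -> In x E -> In a E ->
  In x (nth i Fs []) -> In a (nth j Fs []) -> lt x a -> In x R.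
Proof.
  intros Hdec Hij HE Hks HxE HaE Hxi Haj Hxa.
  apply (decomp_cap_root Hdec Hij Hxi).
  exact (rank_le_cap_lower_closed Hks HE (decomp_block_rank Hdec (proj2 Hij)) HaE Haj HxE Hxa).
Qed.

Hypothesis lt_irrefl : forall x, ~ lt x x.
Hypothesis lt_trans : forall x y z, lt x y -> lt y z -> lt x z.

Lemma same_rank_common_index E G k i j u :
  rank_is T F E k -> rank_is T F G k ->
  nth_error E i = Some u -> nth_error G j = Some u -> i = j.
Proof.
  destruct scheme as (sorted & _ & _ & cap_init & _).
  intros HE HG Hi Hj.
  destruct (cap_init E G k HE HG) as [[_ downE] [_ downG]].
  refine (sorted_common_index lt_irrefl lt_trans (sorted E (rank_is_mem HE))
            (sorted G (rank_is_mem HG)) _ _ Hi Hj).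
  - intros v y HvE HvG Hy Hyv. exact (proj2 (downE v y (conj HvE HvG) Hy Hyv)).
  - intros v y HvG HvE Hy Hyv. exact (proj1 (downG v y (conj HvE HvG) Hy Hyv)).
Qed.

End Scheme.

Section Twins.

Variables (T : Type) (lt : T -> T -> Prop) (m r : nat -> nat) (F : list T -> Prop).

(* Equal positions [j] in the two halves of [D] mean that the increasing
   bijection [phi : D_0 -> D_1] sends [u] to [v]. *)
Definition twins_at (s : nat) (u v : T) : Prop :=
  exists D Fs R j, rank_is T F D (S s) /\ decomp T lt F s 2 (r (S s)) D Fs R /\
    ~ In u R /\ ~ In v R /\
    nth_error (nth 0 Fs []) j = Some u /\ nth_error (nth 1 Fs []) j = Some v.

Definition twins (u v : T) : Prop := exists s, twins_at s u v.

Definition twin_colouring (u v : T) : bool :=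
  if excluded_middle_informative (twins u v) then true else false.

Lemma twin_colouring_true u v : twin_colouring u v = true <-> twins u v.
Proof.
  unfold twin_colouring.
  destruct (excluded_middle_informative (twins u v)); split; easy.
Qed.

Lemma twins_at_mem s u v :
  twins_at s u v -> exists D, rank_is T F D (S s) /\ In u D /\ In v D.
Proof.
  intros (D & Fs & R & j & HD & Hdec & _ & _ & Hu & Hv).
  exists D. split; [exact HD|]. split.
  - exact (decomp_block_mem Hdec Nat.lt_0_2 (nth_error_In _ _ Hu)).
  - exact (decomp_block_mem Hdec Nat.lt_1_2 (nth_error_In _ _ Hv)).
Qed.

Lemma twins_at_level_ge K L s x v :
  (forall y k E, k <= K -> rank_is T F E k -> In y E -> In v E -> lt y v -> In y L) ->
  ~ In x L -> lt x v -> twins_at s x v -> K <= s.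
Proof.
  intros HL HxL Hxv Htw. destruct (twins_at_mem Htw) as (D & HD & HxD & HvD).
  apply Nat.nlt_ge. intro Hs. exact (HxL (HL x (S s) D Hs HD HxD HvD Hxv)).
Qed.

Lemma captured_singletons_twins l A cs :
  captures T lt m (fun _ => 2) r F l A cs -> length cs = 2 ->
  (forall c, In c cs -> exists y, c = [y]) ->
  exists u v, In [u] cs /\ In [v] cs /\ lt u v /\ twins u v.
Proof.
  intros (_ & HA & _ & cs' & Hperm & Fs & R & k & -> & Hdec & Hcap) Hlen Hsing.
  assert (Hsing' : forall c, In c cs' -> exists y, c = [y])
    by (intros c Hc; exact (Hsing c (Permutation_in c (Permutation_sym Hperm) Hc))).
  rewrite (Permutation_length Hperm) in Hlen.
  destruct cs' as [|c0 [|c1 [|]]]; try discriminate.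
  destruct (Hsing' c0 (or_introl eq_refl)) as [u ->].
  destruct (Hsing' c1 (or_intror (or_introl eq_refl))) as [v ->].
  destruct (Hcap 0 Nat.lt_0_2) as (Hu & (u' & [<-|[]] & HuR) & _).
  destruct (Hcap 1 Nat.lt_1_2) as (Hv & (v' & [<-|[]] & HvR) & Hphi).
  destruct (proj1 (Hphi v) (or_introl eq_refl)) as (j & x & Hj0 & [<-|[]] & Hj1).
  exists u, v. split; [|split; [|split]].
  - apply (Permutation_in _ (Permutation_sym Hperm)). left. reflexivity.
  - apply (Permutation_in _ (Permutation_sym Hperm)). right. left. reflexivity.
  - destruct Hdec as (_ & _ & _ & _ & _ & _ & _ & Hord).
    apply (Hord 0 Nat.lt_1_2); split; auto; [apply Hu | apply Hv]; left; reflexivity.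
  - exists k, A, Fs, R, j. auto 6.
Qed.

Lemma twin_colouring_0_countable :
  n_capturing T lt m (fun _ => 2) r 2 F ->
  forall Y, monochromatic T lt twin_colouring false Y -> countable T Y.
Proof.
  intros capturing Y HY. apply NNPP. intro Y_unc.
  set (singletons := fun c : list T => exists y, Y y /\ c = [y]).
  assert (sing_fin : forall c, singletons c -> finset T lt c)
    by (intros c (y & _ & ->); repeat constructor).
  assert (sing_unc : uncountable_family T singletons).
  { intros (g & Hg). apply Y_unc. exists (fun y => g [y]). intros x y Hx Hy Hxy.
    assert (E : [x] = [y]) by (apply Hg; unfold singletons; eauto).
    injection E. auto. }
  destruct (capturing singletons sing_fin sing_unc 0)
    as (cs & l & A & _ & Hlen & Hsing & _ & Hcap).
  rewrite Forall_forall in Hsing.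
  destruct (captured_singletons_twins Hcap Hlen) as (u & v & Hu & Hv & Huv & Htw).
  { intros c Hc. destruct (Hsing c Hc) as (y & _ & ->). eauto. }
  destruct (Hsing _ Hu) as (u' & Yu & [= <-]).
  destruct (Hsing _ Hv) as (v' & Yv & [= <-]).
  pose proof (HY u v Yu Yv Huv) as Hfalse.
  apply twin_colouring_true in Htw. congruence.
Qed.

Hypothesis lt_irrefl : forall x, ~ lt x x.
Hypothesis lt_trans : forall x y z, lt x y -> lt y z -> lt x z.
Hypothesis scheme : construction_scheme T lt m (fun _ => 2) r F.

Lemma twins_no_triangle_above s0 s1 s2 x a b :
  twins_at s0 a b -> twins_at s1 x a -> twins_at s2 x b ->
  s0 < s1 -> s0 < s2 -> lt x a -> lt a b -> False.
Proof.
  intros (DH & HFs & RH & jH & HDH & HdecH & _ & _ & HaH & HbH)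
         (DA & AFs & RA & j & HDA & HdecA & HxRA & _ & HxA & HaA)
         (DB & BFs & RB & j' & HDB & HdecB & HxRB & _ & HxB & HbB) Hs1 Hs2 Hxa Hab.
  assert (HaDH := decomp_block_mem HdecH Nat.lt_0_2 (nth_error_In _ _ HaH)).
  assert (HbDH := decomp_block_mem HdecH Nat.lt_1_2 (nth_error_In _ _ HbH)).
  assert (HxDA := decomp_block_mem HdecA Nat.lt_0_2 (nth_error_In _ _ HxA)).
  assert (HaDA := decomp_block_mem HdecA Nat.lt_1_2 (nth_error_In _ _ HaA)).
  assert (HxDB := decomp_block_mem HdecB Nat.lt_0_2 (nth_error_In _ _ HxB)).
  assert (HaB : In a (nth 1 BFs [])).
  { exact (rank_le_cap_lower_closed scheme Hs2 HDH (decomp_block_rank HdecB Nat.lt_1_2)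
             HbDH (nth_error_In _ _ HbB) HaDH Hab). }
  assert (HaDB := decomp_block_mem HdecB Nat.lt_1_2 HaB).
  destruct (lt_eq_lt_dec s1 s2) as [[Hlt|<-]|Hgt].
  - apply HxRB. exact (below_later_block_in_root scheme HdecB (conj Nat.lt_0_1 Nat.lt_1_2)
                         HDA Hlt HxDA HaDA (nth_error_In _ _ HxB) HaB Hxa).
  - assert (j' = j) as ->.
    { exact (same_rank_common_index scheme lt_irrefl lt_trans
               (decomp_block_rank HdecB Nat.lt_0_2) (decomp_block_rank HdecA Nat.lt_0_2) HxB HxA). }
    destruct (In_nth_error _ _ HaB) as [j'' HaB'].
    assert (j = j'') as <-.
    { exact (same_rank_common_index scheme lt_irrefl lt_trans
               (decomp_block_rank HdecA Nat.lt_1_2) (decomp_block_rank HdecB Nat.lt_1_2) HaA HaB'). }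
    rewrite HbB in HaB'. injection HaB' as ->. exact (lt_irrefl Hab).
  - apply HxRA. exact (below_later_block_in_root scheme HdecA (conj Nat.lt_0_1 Nat.lt_1_2)
                         HDB Hgt HxDB HaDB (nth_error_In _ _ HxA) (nth_error_In _ _ HaA) Hxa).
Qed.

Lemma twin_colouring_1_no_omega_plus_2 Y :
  monochromatic T lt twin_colouring true Y -> ~ ordtype_omega_plus_2 T lt Y.
Proof.
  intros HY (f & a & b & f_incr & f_below & Hab & HYeq).
  assert (Ya : Y a) by (apply HYeq; auto).
  assert (Yb : Y b) by (apply HYeq; auto).
  assert (Yf : forall i, Y (f i)) by (intro i; apply HYeq; eauto).
  assert (Y_twins : forall u v, Y u -> Y v -> lt u v -> twins u v)
    by (intros u v Yu Yv Huv; apply twin_colouring_true, HY; assumption).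
  destruct (Y_twins a b Ya Yb Hab) as [s0 Hab_tw].
  destruct (low_rank_predecessors_finite scheme a (S s0)) as [La HLa].
  destruct (low_rank_predecessors_finite scheme b (S s0)) as [Lb HLb].
  assert (f_inj : Injective f).
  { intros i j Hij. destruct (Nat.lt_total i j) as [H|[H|H]]; [exfalso| |exfalso]; auto.
    - apply (@lt_irrefl (f j)). rewrite <- Hij at 1. exact (f_incr i j H).
    - apply (@lt_irrefl (f i)). rewrite Hij at 1. exact (f_incr j i H). }
  destruct (injective_not_in_list (La ++ Lb) f_inj) as [i Hi].
  assert (Hxa : lt (f i) a) by exact (f_below i).
  assert (Hxb : lt (f i) b) by exact (lt_trans Hxa Hab).
  destruct (Y_twins _ _ (Yf i) Ya Hxa) as [s1 Hxa_tw].
  destruct (Y_twins _ _ (Yf i) Yb Hxb) as [s2 Hxb_tw].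
  apply (twins_no_triangle_above Hab_tw Hxa_tw Hxb_tw); [| |exact Hxa|exact Hab].
  - exact (twins_at_level_ge HLa (fun H => Hi (in_or_app _ _ _ (or_introl H))) Hxa Hxa_tw).
  - exact (twins_at_level_ge HLb (fun H => Hi (in_or_app _ _ _ (or_intror H))) Hxb Hxb_tw).
Qed.

End Twins.

Theorem mainTheorem10 :
  forall (T : Type) (lt : T -> T -> Prop),
    IsOmega1 T lt -> CA T lt 2 ->
    exists c : T -> T -> bool,
      (forall Y : T -> Prop, monochromatic T lt c false Y -> countable T Y) /\
      (forall Y : T -> Prop, monochromatic T lt c true Y -> ~ ordtype_omega_plus_2 T lt Y).
Proof.
  intros T lt (lt_irrefl & lt_trans & _) CA2.
  destruct (CA2 binary_size (fun _ => 2) root_size binary_type (fun _ _ => le_n 2))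
    as (F & scheme & capturing).
  exists (twin_colouring lt root_size F). split.
  - exact (twin_colouring_0_countable capturing).
  - exact (twin_colouring_1_no_omega_plus_2 lt_irrefl lt_trans scheme).
Qed.
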